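(* In the setting of the context, suppose Assumption (A) holds with data $(g,n,m,d)$. Then there exist $a_1,a_2\in\mathbb R_+$ such that for all $z\in\mathsf Z$: (1) $|v^*(z)|\le\sum_{t=0}^{n-1}\beta^t\mathbb E_z[|r(Z_t)|+|c(Z_t)|]+a_1g(z)+a_2$; (2) $|\psi^*(z)|\le\sum_{t=1}^{n-1}\beta^t\mathbb E_z|r(Z_t)|+\sum_{t=0}^{n-1}\beta^t\mathbb E_z|c(Z_t)|+a_1g(z)+a_2$.
   Context: $P$ is a stochastic kernel on a measurable space $(\mathsf Z,\mathscr Z)$, $P^0(z,\cdot)=\delta_z$, $P^n(z,B)=\int P(z',B)P^{n-1}(z,dz')$; $(Z_t)$ is a time-homogeneous Markov process with kernel $P$ adapted to a filtration; $\mathbb E_zh(Z_t)=\int h\,dP^t(z,\cdot)$. $\beta\in(0,1)$; $r,c:\mathsf Z\to\mathbb R$ measurable. $v^*(z)=\sup_\tau\mathbb E_z\{\sum_{t=0}^{\tau-1}\beta^tc(Z_t)+\beta^\tau r(Z_\tau)\}$ over a.s. finite $\mathbb N_0$-valued stopping times, $\psi^*(z)=c(z)+\beta\int v^*(z')P(z,dz')$. Assumption (A): there exist measurable $g:\mathsf Z\to\mathbb R_+$, $n\in\mathbb N_0$, $m,d\ge0$ with $\beta m<1$ such that $\max\{\int|r|dP^n(z,\cdot),\int|c|dP^n(z,\cdot)\}\le g(z)$ and $\int g(z')P(z,dz')\le mg(z)+d$ for all $z$. *)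

From HB Require Import structures.
From mathcomp Require Import all_boot all_order all_algebra.
From mathcomp Require Import all_classical all_reals all_analysis.
Set Implicit Arguments.
Unset Strict Implicit.
Unset Printing Implicit Defensive.
Import Order.TTheory GRing.Theory Num.Theory.
Local Open Scope classical_set_scope.
Local Open Scope ring_scope.
Local Open Scope ereal_scope.

Section Defs.
Context {dZ dO : measure_display} {Z : measurableType dZ}
  {Om : measurableType dO} {R : realType}.

Fixpoint kiter (P : R.-ker Z ~> Z) (n : nat) : Z -> set Z -> \bar R :=
  match n with
  | 0%N => fun z B => @dirac _ Z z R B
  | n'.+1 => fun z B => \int[kiter P n' z]_z' P z' B
  end.

Definition is_filtration (F : nat -> set (set Om)) : Prop :=
  [/\ (forall t, sigma_algebra setT (F t)),
      (forall t, F t `<=` measurable) &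
      (forall s t, (s <= t)%N -> F s `<=` F t)].

(* (X_t) is a time-homogeneous Markov process with kernel P, adapted to F,
   under the family of laws (Pr z) indexed by the initial state z *)
Definition markov_process (P : R.-ker Z ~> Z) (Pr : Z -> probability Om R)
  (F : nat -> set (set Om)) (X : nat -> Om -> Z) : Prop :=
  [/\ is_filtration F,
      (forall t B, measurable B -> F t (X t @^-1` B)),
      (forall z B, measurable B -> Pr z (X 0%N @^-1` B) = \d_z B),
      (forall z t A B, F t A -> measurable B ->
         Pr z (A `&` X t.+1 @^-1` B) = \int[Pr z]_(w in A) P (X t w) B) &
      (* E_z h(Z_t) = \int h dP^t(z,.) (a consequence of the above) *)
      (forall z t (h : Z -> R), measurable_fun setT h ->
         \int[Pr z]_w (h (X t w))%:E = \int[kiter P t z]_x (h x)%:E)].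

(* stopping times with values in N_0 \cup {oo}, None standing for oo *)
Definition stopping_time (F : nat -> set (set Om)) (tau : Om -> option nat)
  : Prop := forall t, F t [set w | tau w = Some t].

(* reward sum_{t<tau} beta^t c(Z_t) + beta^tau r(Z_tau), (set to 0 on the
   null event {tau = oo}) *)
Definition payoff (beta : R) (r c : Z -> R) (X : nat -> Om -> Z)
  (tau : Om -> option nat) (w : Om) : \bar R :=
  match tau w with
  | Some k => ((\sum_(0 <= t < k) beta ^+ t * c (X t w))
               + beta ^+ k * r (X k w))%:E
  | None => 0
  end.

Definition vstar (Pr : Z -> probability Om R) (F : nat -> set (set Om))
  (X : nat -> Om -> Z) (beta : R) (r c : Z -> R) (z : Z) : \bar R :=
  ereal_sup [set \int[Pr z]_w payoff beta r c X tau w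
            | tau in [set tau | stopping_time F tau /\
                                Pr z [set w | tau w = None] = 0]].

Definition psistar (P : R.-ker Z ~> Z) (Pr : Z -> probability Om R)
  (F : nat -> set (set Om)) (X : nat -> Om -> Z) (beta : R) (r c : Z -> R)
  (z : Z) : \bar R :=
  (c z)%:E + beta%:E * \int[P z]_z' vstar Pr F X beta r c z'.

End Defs.

From HB Require Import structures.
From mathcomp Require Import all_boot all_order all_algebra.
From mathcomp Require Import all_classical all_reals all_analysis.
From mathcomp Require Import measurable_realfun lra ring.
Import Order.TTheory GRing.Theory Num.Theory.
Local Open Scope classical_set_scope.
Local Open Scope ring_scope.
Local Open Scope ereal_scope.

(* Every payoff is dominated by the discounted total cost
   sum_t beta^t (|r| + |c|)(Z_t), whose expectation splits into its first n
   terms and a tail.  Choose q >= m with 1 < q < 1/beta; then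
   G := g + d/(q - 1) satisfies P G <= q G, hence
   E_z (|r| + |c|)(Z_(n+k)) <= 2 q^k G(z) and the tail is at most
   2 G(z) / (1 - beta q), an affine function of g(z).  Integrating this bound
   on v* against P(z, .) bounds psi* = c + beta P v*: the shifted sum gives back
   the first n terms up to beta^n E_z (|r| + |c|)(Z_n) <= 2 g(z), and the drift
   condition turns a1 g + a2 into a1 (m g + d) + a2, which is absorbed for
   a suitable choice of a1 and a2. *)

Lemma abse_le_bounds (R : realType) (x M : \bar R) :
  - M <= x -> x <= M -> `|x| <= M.
Proof.
case: x M => [x||] [M||] //= lMx lxM; rewrite ?leey //.
by rewrite lee_fin ler_norml -!lee_fin lMx lxM.
Qed.

Lemma abse_subr_ge0_le (R : realType) (a b M : \bar R) :
  0 <= a -> 0 <= b -> a <= M -> b <= M -> `|a - b| <= M.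
Proof.
case: a b M => [a||] [b||] [M||] //= a0 b0 aM bM; rewrite ?leey //.
rewrite !lee_fin in a0 b0 aM bM *; rewrite ler_norml; apply/andP; split; lra.
Qed.

Section integral_without_measurability.
Context d (T : measurableType d) (R : realType).
Variable mu : {measure set T -> \bar R}.

(* The integral of a nonnegative function is a supremum over simple
   minorants, so monotonicity needs no measurability. *)
Lemma ge0_le_integralT (f1 f2 : T -> \bar R) :
  (forall x, 0 <= f1 x) -> (forall x, f1 x <= f2 x) ->
  \int[mu]_x f1 x <= \int[mu]_x f2 x.
Proof.
move=> f10 f12; have f20 x : 0 <= f2 x by apply: le_trans (f12 x).
rewrite !ge0_integralTE //=; apply: ereal_sup_le => _ [h hf <-].
by exists h => // x; apply: le_trans (f12 x).
Qed.

Lemma abse_integral_le (f B : T -> \bar R) :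
  (forall x, `|f x| <= B x) -> `|\int[mu]_x f x| <= \int[mu]_x B x.
Proof.
move=> fB; rewrite integralE; apply: abse_subr_ge0_le.
- by apply: integral_ge0 => x _; exact: funepos_ge0.
- by apply: integral_ge0 => x _; exact: funeneg_ge0.
- apply: ge0_le_integralT => x; first exact: funepos_ge0.
  apply: le_trans (fB x); rewrite funeposE.
  case: (f x) => [y||] //=; rewrite ?leey //.
  by rewrite ge_max !lee_fin ler_norm normr_ge0.
- apply: ge0_le_integralT => x; first exact: funeneg_ge0.
  apply: le_trans (fB x); rewrite funenegE.
  case: (f x) => [y||] //=; rewrite ?leey //.
  by rewrite ge_max !lee_fin -normrN ler_norm normr_ge0.
Qed.

End integral_without_measurability.

Lemma abse_ereal_sup_le (R : realType) (S : set (\bar R)) (B : \bar R) :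
  S !=set0 -> (forall y, S y -> `|y| <= B) -> `|ereal_sup S| <= B.
Proof.
move=> [y0 Sy0] SB; apply: abse_le_bounds.
  apply: le_trans (ereal_sup_ubound Sy0).
  by rewrite leeNl; apply: le_trans (SB _ Sy0); rewrite -abseN lee_abs.
by apply: ge_ereal_sup => y Sy; apply: le_trans (SB _ Sy); exact: lee_abs.
Qed.

Lemma eseries_geometric (R : realType) (q : R) : (0 <= q < 1)%R ->
  \sum_(0 <= k <oo) (q ^+ k)%:E = ((1 - q)^-1)%:E.
Proof.
case/andP => q0 q1; apply/cvg_lim => //.
under eq_fun do rewrite sumEFin.
apply/cvg_EFin; first exact: nearW.
have := @cvg_geometric_series R 1 q; rewrite ger0_norm // mul1r => /(_ q1).
apply: cvg_trans; apply: near_eq_cvg; apply: nearW => k.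
by apply: eq_bigr => i _; rewrite /= mul1r.
Qed.

Lemma nneseries_geometric_tail_le (R : realType) (a : nat -> \bar R) (n : nat)
    (q C : R) :
  (0 <= q < 1)%R -> (forall t, 0 <= a t) ->
  (forall k, a (k + n)%N <= (C * q ^+ k)%:E) ->
  \sum_(0 <= t <oo) a t <= \sum_(0 <= t < n) a t + (C / (1 - q))%:E.
Proof.
move=> /andP[q0 q1] a0 aC.
have C0 : (0 <= C)%R.
  by have := le_trans (a0 (0 + n)%N) (aC 0%N); rewrite expr0 mulr1.
rewrite (nneseries_split 0 n) // add0n -nneseries_addn //; apply: leeD => //.
apply: (@le_trans _ _ (\sum_(0 <= k <oo) C%:E * (q ^+ k)%:E)).
  apply: lee_nneseries => [k _ _|k _]; first exact: a0.
  by rewrite -EFinM; exact: aC.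
rewrite nneseriesZl; last by move=> k _; rewrite lee_fin exprn_ge0.
by rewrite eseries_geometric ?q0 // -EFinM.
Qed.

(* Equality holds when 0 < n. *)
Lemma discounted_shift_le (R : realType) (beta : R) (rho gam : nat -> \bar R)
    (K : \bar R) (n : nat) :
  (0 <= beta)%R -> (forall t, 0 <= rho t) -> (forall t, 0 <= gam t) ->
  0 <= K ->
  gam 0%N + beta%:E *
    (\sum_(0 <= t < n) (beta ^+ t)%:E * (rho t.+1 + gam t.+1) + K)
  <= \sum_(1 <= t < n) (beta ^+ t)%:E * rho t
     + \sum_(0 <= t < n) (beta ^+ t)%:E * gam t
     + ((beta ^+ n)%:E * (rho n + gam n) + beta%:E * K).
Proof.
move=> b0 rho0 gam0 K0.
have term0 t s : 0 <= (beta ^+ t)%:E * (rho s + gam s).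
  by rewrite mule_ge0 ?adde_ge0 // lee_fin exprn_ge0.
rewrite ge0_muleDr //; last by apply: sume_ge0 => t _; exact: term0.
rewrite !addeA; apply: leeD => //.
have -> : beta%:E * \sum_(0 <= t < n) (beta ^+ t)%:E * (rho t.+1 + gam t.+1)
    = \sum_(1 <= t < n.+1) (beta ^+ t)%:E * (rho t + gam t).
  rewrite ge0_sume_distrr; last by move=> t _; exact: term0.
  by rewrite big_add1 /=; apply: eq_bigr => t _; rewrite muleA -EFinM -exprS.
case: n => [|n].
  by rewrite !big_geq // add0e !adde0 add0e expr0 mul1e leeDr.
rewrite big_nat_recr //= [X in _ <= _ + X + _]big_ltn //= expr0 mul1e.
under eq_bigr do rewrite ge0_muleDr ?lee_fin ?exprn_ge0 //.
rewrite big_split /= addeA [gam 0%N + _]addeC -!addeA.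
by rewrite (addeCA (gam 0%N)) lexx.
Qed.

Section kernel_power.
Context {d : measure_display} {T : measurableType d} {R : realType}.
Variable P : R.-pker T ~> T.

(* [kiter] rebuilt as an iterated kernel composition, so that it is an
   s-finite kernel and [integral_kcomp] applies to it. *)
Fixpoint kpow (n : nat) : R.-sfker T ~> T :=
  match n with
  | 0%N => kdirac (@measurable_id _ T setT)
  | n.+1 => kpow n \; @kernel.kernel_snd _ _ _ T T T R P
  end.

Lemma kpowE n x : kpow n x = kiter P n x :> (set T -> \bar R).
Proof. by elim: n x => [//|n IH] x /=; rewrite -IH. Qed.

Lemma measurable_integral_kernel d' (T' : measurableType d')
    (k : R.-ker T' ~> T) (f : T -> \bar R) :
  (forall y, 0 <= f y) -> measurable_fun setT f ->
  measurable_fun setT (fun x => \int[k x]_y f y).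
Proof.
move=> f0 mf; apply: measurable_fun_integral_kernel => //.
exact: measurable_kernel.
Qed.

Lemma integral_kpow0 x (f : T -> \bar R) :
  measurable_fun setT f -> \int[kpow 0 x]_y f y = f x.
Proof. by move=> mf; rewrite /= integral_dirac // diracT mul1e. Qed.

Lemma integral_kpowS n x (f : T -> \bar R) :
  (forall y, 0 <= f y) -> measurable_fun setT f ->
  \int[kpow n.+1 x]_y f y = \int[kpow n x]_y \int[P y]_z f z.
Proof. by move=> f0 mf; rewrite /= integral_kcomp. Qed.

Lemma integral_kpow1 x (f : T -> \bar R) :
  (forall y, 0 <= f y) -> measurable_fun setT f ->
  \int[kpow 1 x]_y f y = \int[P x]_y f y.
Proof.
move=> f0 mf; rewrite integral_kpowS // integral_kpow0 //.
exact: measurable_integral_kernel.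
Qed.

Lemma integral_kpowD a b x (f : T -> \bar R) :
  (forall y, 0 <= f y) -> measurable_fun setT f ->
  \int[kpow (a + b) x]_y f y = \int[kpow b x]_y \int[kpow a y]_z f z.
Proof.
elim: a x f => [|a IH] x f f0 mf.
  by rewrite add0n; apply: eq_integral => y _; rewrite integral_kpow0.
rewrite addSn integral_kpowS // IH //; last exact: measurable_integral_kernel.
  by apply: eq_integral => y _; rewrite integral_kpowS.
by move=> y; exact: integral_ge0.
Qed.

Lemma integral_kernel_affine_le (g : T -> R) (m c a1 a2 : R) x :
  measurable_fun setT g -> (forall y, 0 <= g y)%R ->
  (0 <= a1)%R -> (0 <= a2)%R ->
  (forall y, \int[P y]_z (g z)%:E <= (m * g y + c)%:E) ->
  \int[P x]_y (a1 * g y + a2)%:E <= (a1 * (m * g x + c) + a2)%:E.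
Proof.
move=> mg g0 a10 a20 drift.
have mgE : measurable_fun setT (fun y => (g y)%:E) by exact/measurable_EFinP.
under eq_integral do rewrite EFinD EFinM.
rewrite ge0_integralD //; first last.
- by apply: emeasurable_funM => //; exact: measurable_cst.
- by move=> y _; rewrite mule_ge0 ?lee_fin.
rewrite ge0_integralZl_EFin //; last by move=> y _; rewrite lee_fin.
rewrite integral_cst // prob_kernel mule1 EFinD EFinM leeD2r //.
exact: lee_wpmul2l.
Qed.

Lemma integral_kpow_drift (G : T -> R) (q : R) k x :
  measurable_fun setT G -> (forall y, 0 <= G y)%R -> (0 <= q)%R ->
  (forall y, \int[P y]_z (G z)%:E <= (q * G y)%:E) ->
  \int[kpow k x]_y (G y)%:E <= (q ^+ k * G x)%:E.
Proof.
move=> mG G0 q0 drift.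
have mGE : measurable_fun setT (fun y => (G y)%:E) by exact/measurable_EFinP.
have G0E y : 0 <= (G y)%:E by rewrite lee_fin.
elim: k x => [|k IH] x; first by rewrite integral_kpow0 // expr0 mul1r.
rewrite integral_kpowS //.
apply: (@le_trans _ _ (\int[kpow k x]_y (q%:E * (G y)%:E))).
  apply: ge0_le_integral => //.
  - by move=> y _; exact: integral_ge0.
  - exact: measurable_integral_kernel.
  - by apply: emeasurable_funM => //; exact: measurable_cst.
by rewrite ge0_integralZl_EFin // exprS -mulrA EFinM lee_wpmul2l ?lee_fin.
Qed.

Lemma integral_kpow_tail_le (h G : T -> R) (q C : R) n k x :
  measurable_fun setT h -> (forall y, 0 <= h y)%R ->
  measurable_fun setT G -> (forall y, 0 <= G y)%R -> (0 <= q)%R -> (0 <= C)%R ->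
  (forall y, \int[P y]_z (G z)%:E <= (q * G y)%:E) ->
  (forall y, \int[kpow n y]_z (h z)%:E <= (C * G y)%:E) ->
  \int[kpow (n + k) x]_y (h y)%:E <= (C * (q ^+ k * G x))%:E.
Proof.
move=> mh h0 mG G0 q0 C0 drift hn.
have h0E y : 0 <= (h y)%:E by rewrite lee_fin.
have G0E y : 0 <= (G y)%:E by rewrite lee_fin.
have mGE : measurable_fun setT (fun y => (G y)%:E) by exact/measurable_EFinP.
rewrite integral_kpowD //; last exact/measurable_EFinP.
apply: (@le_trans _ _ (\int[kpow k x]_y (C%:E * (G y)%:E))).
  apply: ge0_le_integral => //.
  - by move=> y _; exact: integral_ge0.
  - by apply: measurable_integral_kernel => //; exact/measurable_EFinP.
  - by apply: emeasurable_funM => //; exact: measurable_cst.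
rewrite ge0_integralZl_EFin // EFinM lee_wpmul2l ?lee_fin //.
exact: integral_kpow_drift.
Qed.

Lemma kernel_drift_shift (g : T -> R) (m c q : R) y :
  measurable_fun setT g -> (forall x, 0 <= g x)%R -> (0 <= c)%R ->
  (m <= q)%R -> (1 < q)%R ->
  (forall x, \int[P x]_z (g z)%:E <= (m * g x + c)%:E) ->
  \int[P y]_z (g z + c / (q - 1))%:E <= (q * (g y + c / (q - 1)))%:E.
Proof.
move=> mg g0 c_ge0 mq q1 drift; set c0 := (c / (q - 1))%R.
have c00 : (0 <= c0)%R by rewrite divr_ge0 // subr_ge0 ltW.
have cE : ((q - 1) * c0 = c)%R by rewrite mulrC divfK // subr_eq0 gt_eqF.
under eq_integral do rewrite -[g _]mul1r.
apply: le_trans (integral_kernel_affine_le _ _ _ _ _ _ mg g0 ler01 c00 drift) _.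
rewrite lee_fin mul1r.
have : (0 <= (q - m) * g y)%R by rewrite mulr_ge0 // subr_ge0.
nra.
Qed.

End kernel_power.

Section markov_chain.
Context {dZ dO : measure_display} {Z : measurableType dZ}
  {Om : measurableType dO} {R : realType}.
Variables (P : R.-pker Z ~> Z) (Pr : Z -> probability Om R).
Variables (F : nat -> set (set Om)) (X : nat -> Om -> Z).
Hypothesis markovX : markov_process P Pr F X.

Lemma measurable_process t : measurable_fun setT (X t).
Proof.
have [[_ FM _] adapted _ _ _] := markovX.
by move=> _ B mB; rewrite setTI; apply: FM; exact: adapted.
Qed.

Lemma expectation_kpow t z (h : Z -> R) : measurable_fun setT h ->
  \int[Pr z]_w (h (X t w))%:E = \int[kpow P t z]_x (h x)%:E.
Proof. by have [_ _ _ _ EX] := markovX; move=> mh; rewrite EX // kpowE. Qed.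

Lemma integral_kernel_expectation t z (h : Z -> R) :
  measurable_fun setT h -> (forall x, 0 <= h x)%R ->
  \int[P z]_y \int[Pr y]_w (h (X t w))%:E = \int[Pr z]_w (h (X t.+1 w))%:E.
Proof.
move=> mh h0.
have mhE : measurable_fun setT (fun x => (h x)%:E) by exact/measurable_EFinP.
have h0E x : 0 <= (h x)%:E by rewrite lee_fin.
under eq_integral do rewrite expectation_kpow //.
rewrite expectation_kpow // -addn1 integral_kpowD // integral_kpow1 //.
- by move=> y; exact: integral_ge0.
- exact: measurable_integral_kernel.
Qed.

Lemma stopping_time_cst k : stopping_time F (fun=> Some k).
Proof.
move=> t; have [[sigmaF _ _] _ _ _ _] := markovX; have [F0 FD _] := sigmaF t.
have [kt|kt] := eqVneq k t.
  suff -> : [set w | Some k = Some t] = [set: Om] `\` set0 by exact: FD.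
  by rewrite setD0 kt; apply/seteqP.
suff -> : [set w | Some k = Some t] = set0 :> set Om by [].
by apply/seteqP; split => // w [kt']; rewrite kt' eqxx in kt.
Qed.

Lemma measurable_expectation t (h : Z -> R) :
  measurable_fun setT h -> (forall x, 0 <= h x)%R ->
  measurable_fun setT (fun y => \int[Pr y]_w (h (X t w))%:E).
Proof.
move=> mh h0; under eq_fun do rewrite expectation_kpow //.
apply: measurable_integral_kernel => [x|]; first by rewrite lee_fin.
exact/measurable_EFinP.
Qed.

Variables (beta : R) (r c : Z -> R).
Hypotheses (beta0 : (0 < beta)%R) (beta1 : (beta < 1)%R).
Hypotheses (mr : measurable_fun setT r) (mc : measurable_fun setT c).

Lemma abse_payoff_le tau w :
  `|payoff beta r c X tau w| <=
    \sum_(0 <= t <oo) (beta ^+ t * (`|r (X t w)| + `|c (X t w)|))%:E.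
Proof.
have bt t : (0 <= beta ^+ t)%R by rewrite exprn_ge0 // ltW.
have term0 t : (0 <= beta ^+ t * (`|r (X t w)| + `|c (X t w)|))%R.
  by rewrite mulr_ge0 ?addr_ge0.
rewrite /payoff; case: (tau w) => [k|]; last first.
  by rewrite abse0; apply: nneseries_ge0 => t _ _; rewrite lee_fin.
apply: (@le_trans _ _
  (\sum_(0 <= t < k.+1) (beta ^+ t * (`|r (X t w)| + `|c (X t w)|)))%:E).
  rewrite lee_fin big_nat_recr //=; apply: le_trans (ler_normD _ _) _.
  apply: lerD; first apply: le_trans (ler_norm_sum _ _ _) _.
    apply: ler_sum => t _; rewrite normrM ger0_norm //.
    by apply: ler_wpM2l => //; rewrite lerDr.
  by rewrite normrM ger0_norm //; apply: ler_wpM2l => //; rewrite lerDl.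
by rewrite -sumEFin; apply: nneseries_lim_ge => t _ _; rewrite lee_fin.
Qed.

Lemma expectation_discounted_sum z (h : Z -> R) :
  measurable_fun setT h -> (forall x, 0 <= h x)%R ->
  \int[Pr z]_w \sum_(0 <= t <oo) (beta ^+ t * h (X t w))%:E =
  \sum_(0 <= t <oo) (beta ^+ t)%:E * \int[Pr z]_w (h (X t w))%:E.
Proof.
move=> mh h0; have bt t : (0 <= beta ^+ t)%R by rewrite exprn_ge0 // ltW.
have mhX t : measurable_fun setT (fun w => h (X t w)).
  exact: measurableT_comp mh (measurable_process t).
rewrite integral_nneseries //; first last.
- by move=> t w _; rewrite lee_fin mulr_ge0.
- by move=> t; apply/measurable_EFinP; apply: measurable_funM.
apply: eq_eseriesr => t _; under eq_integral do rewrite EFinM.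
rewrite ge0_integralZl_EFin //; first by move=> w _; rewrite lee_fin.
exact/measurable_EFinP.
Qed.

Lemma integral_kernel_discounted_sum n (h : Z -> R) z :
  measurable_fun setT h -> (forall x, 0 <= h x)%R ->
  \int[P z]_y \sum_(0 <= t < n) (beta ^+ t)%:E * \int[Pr y]_w (h (X t w))%:E =
  \sum_(0 <= t < n) (beta ^+ t)%:E * \int[Pr z]_w (h (X t.+1 w))%:E.
Proof.
move=> mh h0; have bt t : (0 <= beta ^+ t)%R by rewrite exprn_ge0 // ltW.
rewrite ge0_integral_sum //; first last.
- move=> t y _; rewrite mule_ge0 ?lee_fin //.
  by apply: integral_ge0 => w _; rewrite lee_fin.
- move=> t; apply: emeasurable_funM; first exact: measurable_cst.
  exact: measurable_expectation.
apply: eq_bigr => t _; rewrite ge0_integralZl_EFin //.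
- by rewrite integral_kernel_expectation.
- by move=> y _; apply: integral_ge0 => w _; rewrite lee_fin.
- exact: measurable_expectation.
Qed.

Lemma abse_vstar_le_series z :
  `|vstar Pr F X beta r c z| <=
    \sum_(0 <= t <oo) (beta ^+ t)%:E *
      \int[Pr z]_w (`|r (X t w)| + `|c (X t w)|)%:E.
Proof.
have mh : measurable_fun setT (fun x => `|r x| + `|c x|)%R.
  by apply: measurable_funD; exact: measurableT_comp.
have h0 x : (0 <= `|r x| + `|c x|)%R by rewrite addr_ge0.
rewrite -(expectation_discounted_sum _ (fun x => `|r x| + `|c x|)%R) //.
rewrite /vstar; apply: abse_ereal_sup_le.
  exists (\int[Pr z]_w payoff beta r c X (fun=> Some 0%N) w).
  exists (fun=> Some 0%N) => //; split; first exact: stopping_time_cst.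
  rewrite (_ : [set _ | _] = set0 :> set Om) ?measure0 //.
  by apply/seteqP; split => // w.
by move=> _ [tau _ <-]; apply: abse_integral_le => w; exact: abse_payoff_le.
Qed.

Lemma abse_vstar_le n (G : Z -> R) (q : R) z :
  measurable_fun setT G -> (forall y, 0 <= G y)%R -> (0 <= q)%R ->
  (beta * q < 1)%R ->
  (forall y, \int[P y]_x (G x)%:E <= (q * G y)%:E) ->
  (forall y, \int[kiter P n y]_x (`|r x|)%:E <= (G y)%:E) ->
  (forall y, \int[kiter P n y]_x (`|c x|)%:E <= (G y)%:E) ->
  `|vstar Pr F X beta r c z| <=
    \sum_(0 <= t < n) (beta ^+ t)%:E *
      \int[Pr z]_w (`|r (X t w)| + `|c (X t w)|)%:E
    + (2 * G z / (1 - beta * q))%:E.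
Proof.
move=> mG G0 q0 bq drift hr hc.
have [b0 b1] := (ltW beta0, ltW beta1).
set h := fun x => (`|r x| + `|c x|)%R.
have mar : measurable_fun setT (fun x => (`|r x|)%:E).
  by apply/measurable_EFinP; exact: measurableT_comp.
have mac : measurable_fun setT (fun x => (`|c x|)%:E).
  by apply/measurable_EFinP; exact: measurableT_comp.
have mh : measurable_fun setT h.
  by apply: measurable_funD; exact: measurableT_comp.
have h0 x : (0 <= h x)%R by rewrite addr_ge0.
have hn y : \int[kpow P n y]_x (h x)%:E <= (2 * G y)%:E.
  rewrite /h; under eq_integral do rewrite EFinD.
  rewrite ge0_integralD // !kpowE; apply: le_trans (leeD (hr y) (hc y)) _.
  by rewrite -EFinD lee_fin mulr2n mulrDl mul1r.
apply: le_trans (abse_vstar_le_series z) _.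
apply: nneseries_geometric_tail_le.
- by rewrite mulr_ge0 // bq.
- by move=> t; rewrite mule_ge0 ?lee_fin ?exprn_ge0 //; apply: integral_ge0.
move=> k; rewrite (expectation_kpow _ _ h) // addnC.
have -> : (2 * G z * (beta * q) ^+ k = beta ^+ k * (2 * (q ^+ k * G z)))%R.
  by rewrite exprMn; ring.
rewrite EFinM; apply: lee_pmul.
- by rewrite lee_fin exprn_ge0.
- by apply: integral_ge0 => x _; rewrite lee_fin.
- by rewrite lee_fin exprD ler_piMl ?exprn_ge0 // exprn_ile1.
exact: integral_kpow_tail_le.
Qed.

Lemma abse_psistar_le_integral (B : Z -> \bar R) z :
  (forall y, `|vstar Pr F X beta r c y| <= B y) ->
  `|psistar P Pr F X beta r c z| <= `|c z|%:E + beta%:E * \int[P z]_y B y.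
Proof.
move=> vB; have b0 : 0 <= beta%:E by rewrite lee_fin ltW.
rewrite /psistar; apply: le_trans (lee_abs_add _ _) _.
rewrite abseM (gee0_abs b0); apply: leeD => //.
by apply: lee_wpmul2l => //; exact: abse_integral_le.
Qed.

Lemma integral_kernel_value_bound_le n (h g : Z -> R) (m d a1 a2 : R) z :
  measurable_fun setT h -> (forall x, 0 <= h x)%R ->
  measurable_fun setT g -> (forall y, 0 <= g y)%R ->
  (0 <= a1)%R -> (0 <= a2)%R ->
  (forall y, \int[P y]_x (g x)%:E <= (m * g y + d)%:E) ->
  \int[P z]_y (\sum_(0 <= t < n) (beta ^+ t)%:E * \int[Pr y]_w (h (X t w))%:E
               + (a1 * g y + a2)%:E)
  <= \sum_(0 <= t < n) (beta ^+ t)%:E * \int[Pr z]_w (h (X t.+1 w))%:E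
     + (a1 * (m * g z + d) + a2)%:E.
Proof.
move=> mh h0 mg g0 a10 a20 drift.
have bt t : (0 <= beta ^+ t)%R by rewrite exprn_ge0 // ltW.
rewrite ge0_integralD //; first last.
- apply/measurable_EFinP; apply: measurable_funD => //.
  by apply: measurable_funM => //; exact: measurable_cst.
- by move=> y _; rewrite lee_fin addr_ge0 ?mulr_ge0.
- apply: emeasurable_sum => t; apply: emeasurable_funM.
    exact: measurable_cst.
  exact: measurable_expectation.
- move=> y _; apply: sume_ge0 => t _; rewrite mule_ge0 ?lee_fin //.
  by apply: integral_ge0 => w _; rewrite lee_fin.
rewrite integral_kernel_discounted_sum //; apply: leeD => //.
exact: integral_kernel_affine_le.
Qed.

Lemma abse_psistar_le n (g : Z -> R) (m d a1 a2 : R) z :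
  measurable_fun setT g -> (forall y, 0 <= g y)%R ->
  (0 <= a1)%R -> (0 <= a2)%R ->
  (forall y, \int[kiter P n y]_x (`|r x|)%:E <= (g y)%:E) ->
  (forall y, \int[kiter P n y]_x (`|c x|)%:E <= (g y)%:E) ->
  (forall y, \int[P y]_x (g x)%:E <= (m * g y + d)%:E) ->
  (forall y, `|vstar Pr F X beta r c y| <=
     \sum_(0 <= t < n) (beta ^+ t)%:E *
       \int[Pr y]_w (`|r (X t w)| + `|c (X t w)|)%:E
     + (a1 * g y + a2)%:E) ->
  `|psistar P Pr F X beta r c z| <=
     \sum_(1 <= t < n) (beta ^+ t)%:E * \int[Pr z]_w (`|r (X t w)|)%:E
     + \sum_(0 <= t < n) (beta ^+ t)%:E * \int[Pr z]_w (`|c (X t w)|)%:E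
     + (2 * g z + beta * (a1 * (m * g z + d) + a2))%:E.
Proof.
move=> mg g0 a10 a20 hr hc drift vB.
have [b0 b1] := (ltW beta0, ltW beta1).
have mar : measurable_fun setT (fun x => `|r x|)%R by exact: measurableT_comp.
have mac : measurable_fun setT (fun x => `|c x|)%R by exact: measurableT_comp.
set rho := fun t => \int[Pr z]_w (`|r (X t w)|)%:E.
set gam := fun t => \int[Pr z]_w (`|c (X t w)|)%:E.
have rho0 t : 0 <= rho t by apply: integral_ge0 => w _; rewrite lee_fin.
have gam0 t : 0 <= gam t by apply: integral_ge0 => w _; rewrite lee_fin.
have rho_gam t : \int[Pr z]_w (`|r (X t w)| + `|c (X t w)|)%:E = rho t + gam t.
  under eq_integral do rewrite EFinD.
  rewrite ge0_integralD //; apply/measurable_EFinP;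
    by do 2 apply: measurableT_comp => //; exact: measurable_process.
have gam_0 : gam 0%N = `|c z|%:E.
  rewrite /gam (expectation_kpow _ _ (fun x => `|c x|)%R) // integral_kpow0 //.
  exact/measurable_EFinP.
have rho_gam_n : rho n + gam n <= (2 * g z)%:E.
  rewrite /rho /gam (expectation_kpow _ _ (fun x => `|r x|)%R) //.
  rewrite (expectation_kpow _ _ (fun x => `|c x|)%R) // !kpowE.
  apply: le_trans (leeD (hr z) (hc z)) _.
  by rewrite -EFinD lee_fin mulr2n mulrDl mul1r.
have mgd0 : (0 <= m * g z + d)%R.
  rewrite -lee_fin; apply: le_trans (drift z).
  by apply: integral_ge0 => x _; rewrite lee_fin.
apply: le_trans (abse_psistar_le_integral _ z vB) _.
have := integral_kernel_value_bound_le n (fun x => `|r x| + `|c x|)%R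
  _ _ _ _ _ z (measurable_funD mar mac)
  (fun x => addr_ge0 (normr_ge0 _) (normr_ge0 _)) mg g0 a10 a20 drift.
under eq_bigr do rewrite rho_gam.
have bE : 0 <= beta%:E by rewrite lee_fin.
move=> /(lee_wpmul2l bE) kernel_le.
rewrite -gam_0; apply: le_trans (leeD (lexx _) kernel_le) _.
apply: le_trans (discounted_shift_le _ _ rho gam _ n b0 rho0 gam0 _) _.
  by rewrite lee_fin addr_ge0 ?mulr_ge0.
rewrite -EFinM [in leRHS]EFinD; apply: leeD => //; apply: leeD => //.
apply: le_trans rho_gam_n; rewrite -[leRHS]mul1e.
by apply: lee_wpmul2r; [rewrite adde_ge0 | rewrite lee_fin exprn_ile1].
Qed.

End markov_chain.

Lemma exists_drift_rate (R : realType) (beta m : R) :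
  (0 < beta)%R -> (beta < 1)%R -> (beta * m < 1)%R ->
  exists q : R, [/\ (m <= q)%R, (1 < q)%R & (beta * q < 1)%R].
Proof.
move=> b0 b1 bm; set h := ((1 + beta^-1) / 2)%R.
have binv1 : (1 < beta^-1)%R by rewrite invf_gt1.
have bh : (beta * h < 1)%R.
  by rewrite /h mulrA mulrDr mulr1 mulfV ?gt_eqF //; lra.
exists (Num.max m h); split; first by rewrite le_max lexx.
  by rewrite lt_max /h; apply/orP; right; lra.
by rewrite /Num.max; case: ifP.
Qed.

Lemma affine_bound_constants (R : realType) (beta m d q : R) :
  (0 < beta)%R -> (beta < 1)%R -> (0 <= d)%R -> (m <= q)%R -> (1 < q)%R ->
  (beta * q < 1)%R ->
  exists a1 a2 : R, [/\ (0 <= a1)%R, (0 <= a2)%R,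
    (forall x, 0 <= x ->
       2 * (x + d / (q - 1)) / (1 - beta * q) <= a1 * x + a2)%R &
    (forall x, 0 <= x ->
       2 * x + beta * (a1 * (m * x + d) + a2) <= a1 * x + a2)%R].
Proof.
move=> /ltW b0 b1 d0 mq q1 bq.
set c0 := (d / (q - 1))%R; set a1 := (2 / (1 - beta * q))%R.
set a2 := (a1 * (c0 + beta * d / (1 - beta)))%R.
have c00 : (0 <= c0)%R by rewrite divr_ge0 // subr_ge0 ltW.
have a10 : (0 <= a1)%R by rewrite divr_ge0 // subr_ge0 ltW.
have a20 : (0 <= a2)%R.
  by rewrite mulr_ge0 // addr_ge0 // divr_ge0 ?mulr_ge0 // subr_ge0 ltW.
have a1E : (a1 * (1 - beta * q) = 2)%R by rewrite mulfVK // subr_eq0 gt_eqF.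
have a2E : ((1 - beta) * a2 = (1 - beta) * a1 * c0 + beta * a1 * d)%R.
  by rewrite /a2 /a1; field; rewrite !subr_eq0 !gt_eqF.
exists a1, a2; split => // x x0.
  rewrite mulrAC -/a1 mulrDr lerD2l /a2 ler_wpM2l // lerDl.
  by rewrite divr_ge0 ?mulr_ge0 // subr_ge0 ltW.
clearbody c0 a1 a2.
have : (0 <= a1 * beta * (q - m) * x)%R by rewrite !mulr_ge0 // subr_ge0.
have : (0 <= (1 - beta) * a1 * c0)%R by rewrite !mulr_ge0 // subr_ge0 ltW.
nra.
Qed.

Theorem lemma1 (dZ dO : measure_display) (Z : measurableType dZ)
  (Om : measurableType dO) (R : realType)
  (P : R.-pker Z ~> Z) (Pr : Z -> probability Om R)
  (F : nat -> set (set Om)) (X : nat -> Om -> Z)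
  (beta : R) (r c : Z -> R)
  (g : Z -> R) (n : nat) (m dd : R) :
  markov_process P Pr F X ->
  (0 < beta)%R -> (beta < 1)%R ->
  measurable_fun setT r -> measurable_fun setT c ->
  (* Assumption (A) *)
  measurable_fun setT g -> (forall z, (0 <= g z)%R) ->
  (0 <= m)%R -> (0 <= dd)%R -> (beta * m < 1)%R ->
  (forall z, \int[kiter P n z]_x (`|r x|)%:E <= (g z)%:E) ->
  (forall z, \int[kiter P n z]_x (`|c x|)%:E <= (g z)%:E) ->
  (forall z, \int[P z]_z' (g z')%:E <= (m * g z + dd)%:E) ->
  exists a1 a2 : R, [/\ (0 <= a1)%R, (0 <= a2)%R &
    forall z : Z,
      `| vstar Pr F X beta r c z | <=
        \sum_(0 <= t < n) (beta ^+ t)%:E *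
            \int[Pr z]_w (`|r (X t w)| + `|c (X t w)|)%:E
        + (a1 * g z + a2)%:E
    /\
      `| psistar P Pr F X beta r c z | <=
        \sum_(1 <= t < n) (beta ^+ t)%:E * \int[Pr z]_w (`|r (X t w)|)%:E
        + \sum_(0 <= t < n) (beta ^+ t)%:E * \int[Pr z]_w (`|c (X t w)|)%:E
        + (a1 * g z + a2)%:E].
Proof.
move=> markovX b0 b1 mr mc mg g0 m0 d0 bm hr hc hg.
have [q [mq q1 bq]] := exists_drift_rate _ _ _ b0 b1 bm.
have [a1 [a2 [a10 a20 tail_le super]]] :=
  affine_bound_constants _ _ _ _ _ b0 b1 d0 mq q1 bq.
pose G y := (g y + dd / (q - 1))%R.
have gG y : (g y <= G y)%R by rewrite lerDl divr_ge0 // subr_ge0 ltW.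
have hv y : `|vstar Pr F X beta r c y| <=
    \sum_(0 <= t < n) (beta ^+ t)%:E *
      \int[Pr y]_w (`|r (X t w)| + `|c (X t w)|)%:E
    + (a1 * g y + a2)%:E.
  apply: le_trans (abse_vstar_le _ _ _ _ markovX _ _ _ b0 b1 mr mc n G q y
    _ _ (le_trans m0 mq) bq _ _ _) _.
  - by apply: measurable_funD => //; exact: measurable_cst.
  - by move=> x; rewrite addr_ge0 // divr_ge0 // subr_ge0 ltW.
  - by move=> x; exact: (kernel_drift_shift _ _ _ _ _ _ mg g0 d0 mq q1 hg).
  - by move=> x; apply: le_trans (hr x) _; rewrite lee_fin.
  - by move=> x; apply: le_trans (hc x) _; rewrite lee_fin.
  by apply: leeD => //; rewrite lee_fin tail_le.
exists a1, a2; split => // z; split; first exact: hv.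
apply: le_trans (abse_psistar_le _ _ _ _ markovX _ _ _ b0 b1 mr mc
  n g m dd a1 a2 z mg g0 a10 a20 hr hc hg hv) _.
by apply: leeD => //; rewrite lee_fin super.
Qed.
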